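(* Let $f(X)=\sum_{a=(h_1,\dots,h_N)\in\mathcal{A}} w_a\sum_{\biguplus_{i=1}^N X_i=X}\prod_{i=1}^N f_{h_i}(X_i)$ be a multi-Bernoulli mixture. For Bernoulli densities $[g_j]=(g_1,\dots,g_N)$ and, for each $a\in\mathcal{A}$, a probability distribution $q_a$ on $\Pi_N$ (i.e. $q_a(\pi)\ge 0$, $\sum_{\pi\in\Pi_N}q_a(\pi)=1$), define the zero-temperature objective $$\tilde J_0\big([g_j],[q_a(\pi)]\big)=-\sum_{a\in\mathcal{A},\pi\in\Pi_N} w_a q_a(\pi)\sum_{i=1}^N\int f_{h_i}(X)\log g_{\pi(i)}(X)\,\delta X .$$ Then minimising $\tilde J_0$ jointly over $[g_j]$ (Bernoulli densities, $g_j\ge0$, $\int g_j(X)\delta X=1$) and $[q_a(\pi)]$ is equivalent to solving $$\operatorname*{minimise}_{q(h,j)\in\mathcal{P}}\ -\sum_{j=1}^N\int\Big(\sum_{h\in\mathcal{H}}q(h,j)f_h(X)\Big)\log\Big(\sum_{h\in\mathcal{H}}q(h,j)f_h(X)\Big)\,\delta X,$$ where $$\mathcal{P}=\Big\{q(h,j)=\sum_{i=1}^N\Big(\sum_{a=(h_1,\dots,h_N)\in\mathcal{A}:\,h_i=h} w_a\sum_{\pi\in\Pi_N:\,\pi(i)=j}q_a(\pi)\Big)\ \Big|\ q_a(\pi)\ge0,\ \sum_{\pi\in\Pi_N}q_a(\pi)=1\ \forall a\Big\}.$$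
   Context: Single-target states lie in $\mathcal{X}\subseteq\mathbb{R}^d$. The set integral is $\int v(X)\,\delta X = v(\emptyset)+\sum_{n=1}^\infty\frac{1}{n!}\int\cdots\int v(\{x_1,\dots,x_n\})\,\mathrm{d}x_1\cdots\mathrm{d}x_n$. A Bernoulli density with existence probability $r$ and state density $p(x)$ is $b(\emptyset)=1-r$, $b(\{x\})=r\,p(x)$, $b(X)=0$ for $|X|>1$. $\mathcal{H}$ is an index set of single-target hypotheses, each $f_h$ ($h\in\mathcal{H}$) a Bernoulli density; $\mathcal{A}\subseteq\mathcal{H}^N$ is a finite set of global hypotheses $a=(h_1,\dots,h_N)$ with weights $w_a\ge0$, $\sum_a w_a=1$. $\sum_{\biguplus_{i=1}^N X_i=X}$ sums over ordered tuples of disjoint subsets with union $X$. $\Pi_N$ is the set of permutations of $\{1,\dots,N\}$. Convention $0\log0=0$.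
   Formalization: Each fₕ also has x ↦ fₕ({x}) log fₕ({x}) integrable, and 𝓗 is finite; equivalence means that for every admissible $[q_a(\pi)]$ the minimum of $\tilde J_0$ over $[g_j]$ is attained and equals the reduced objective at the induced q(h,j). Apart from conventions, each condition added here is assumed in the paper as well or is needed for the statement above to hold. *)

From HB Require Import structures.
From mathcomp Require Import all_boot all_order all_algebra all_fingroup.
From mathcomp Require Import all_classical all_reals.
From mathcomp Require Import exp measure lebesgue_measure lebesgue_integral.
Set Implicit Arguments. Unset Strict Implicit. Unset Printing Implicit Defensive.
Import Order.TTheory GRing.Theory Num.Theory.
Local Open Scope ring_scope.

Section Defs.
Context {R : realType} {d : measure_display} {T : measurableType d}.
Variable mu : {measure set T -> \bar R}.

(** [a * log b] with the convention [0 log 0 = 0] (more generally [0 * log b = 0]),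
    and [a * log 0 = -oo] for [a > 0]. *)
Definition xlogy (a b : R) : \bar R :=
  if a == 0 then 0%E else if b <= 0 then (-oo)%E else (a * ln b)%:E.

(** A function on finite subsets of T vanishing on sets of size >= 2 is given by
    its value [u0] at the empty set and [u1 x] at [{x}].  The set integral
    [\int u(X) log v(X) dX] of such functions is then
    [u0 log v0 + \int u1(x) log v1(x) dmu(x)] (higher-order terms vanish). *)
Definition setint_xlogy (u0 : R) (u1 : T -> R) (v0 : R) (v1 : T -> R) : \bar R :=
  (xlogy u0 v0 + \int[mu]_x xlogy (u1 x) (v1 x))%E.

(** Bernoulli density with existence probability [r] and state density [p]:
    b(emptyset) = 1 - r, b({x}) = r p(x). *)
Definition is_bern (r : R) (p : T -> R) : Prop :=
  [/\ 0 <= r <= 1, (forall x, 0 <= p x), measurable_fun setT p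
    & (\int[mu]_x (p x)%:E = 1)%E].

Definition bern0 (r : R) : R := 1 - r.
Definition bern1 (r : R) (p : T -> R) : T -> R := fun x => r * p x.

Variables (N : nat) (H : finType) (fr : H -> R) (fp : H -> T -> R)
  (A : {set N.-tuple H}) (w : N.-tuple H -> R).

Definition J0 (gr : 'I_N -> R) (gp : 'I_N -> T -> R)
    (qa : N.-tuple H -> {perm 'I_N} -> R) : \bar R :=
  (- \sum_(a in A) \sum_(pi : {perm 'I_N})
      (w a * qa a pi)%:E *
      \sum_(i < N) setint_xlogy (bern0 (fr (tnth a i))) (bern1 (fr (tnth a i)) (fp (tnth a i)))
                                (bern0 (gr (pi i))) (bern1 (gr (pi i)) (gp (pi i))))%E.

Definition qP (qa : N.-tuple H -> {perm 'I_N} -> R) (h : H) (j : 'I_N) : R :=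
  \sum_(i < N) \sum_(a in A | tnth a i == h) w a * \sum_(pi : {perm 'I_N} | pi i == j) qa a pi.

Definition mix0 (q : H -> 'I_N -> R) (j : 'I_N) : R :=
  \sum_(h : H) q h j * bern0 (fr h).
Definition mix1 (q : H -> 'I_N -> R) (j : 'I_N) : T -> R :=
  fun x => \sum_(h : H) q h j * bern1 (fr h) (fp h) x.

Definition Obj (q : H -> 'I_N -> R) : \bar R :=
  (- \sum_(j < N) setint_xlogy (mix0 q j) (mix1 q j) (mix0 q j) (mix1 q j))%E.

End Defs.

From HB Require Import structures.
From mathcomp Require Import all_boot all_order all_algebra all_fingroup.
From mathcomp Require Import all_classical all_reals lra.
From mathcomp Require Import exp measure lebesgue_measure lebesgue_integral.
From mathcomp Require Import measurable_realfun numfun.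
Import Order.TTheory GRing.Theory Num.Theory.
Local Open Scope ring_scope.

(* Regrouping the sum over global hypotheses a and permutations pi by the pairs
   (h, j) = (h_i, pi(i)) writes J0 as - sum_j sum_h q(h,j) \int f_h log g_j, where q
   is the induced element of P.  For each j the weights q(., j) sum to one, so
   F_j = sum_h q(h,j) f_h is again a Bernoulli density, and integrating Gibbs'
   inequality x log y <= x log x + y - x gives sum_h q(h,j) \int f_h log g <=
   \int F_j log F_j for every Bernoulli density g, with equality at g = F_j.  Hence
   g_j = F_j minimises J0 for the given q_a, and the minimum is the reduced
   objective at q. *)

Section xlogy.
Context {R : realType}.
Implicit Types (a b c k : R).

Lemma xlogy0 b : xlogy 0 b = 0%E.
Proof. by rewrite /xlogy eqxx. Qed.

Lemma xlogyEr a b : 0 < b -> xlogy a b = (a * ln b)%:E.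
Proof.
move=> b0; rewrite /xlogy leNgt b0 /=.
by case: eqP => [->|]; rewrite ?mul0r.
Qed.

Lemma xlogyxx a : 0 <= a -> xlogy a a = (a * ln a)%:E.
Proof.
rewrite le_eqVlt => /orP[/eqP<-|a0]; first by rewrite xlogy0 mul0r.
exact: xlogyEr.
Qed.

Lemma mul_ln_le a b : 0 < a -> 0 < b -> a * ln b <= a * ln a + (b - a).
Proof.
move=> a0 b0; have ba0 : 0 < b / a by rewrite divr_gt0.
have : ln (b / a) <= b / a - 1.
  by have := @le_ln1Dx R (b / a - 1); rewrite subrKC; apply; lra.
rewrite ln_div ?posrE // => /(ler_wpM2l (ltW a0)).
rewrite !mulrBr mulrCA divff ?gt_eqF // mulr1; lra.
Qed.

Lemma xlogy_le a b : 0 <= a -> 0 <= b -> (xlogy a b <= xlogy a a + (b - a)%:E)%E.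
Proof.
move=> a0 b0; have [->|an0] := eqVneq a 0.
  by rewrite !xlogy0 add0e subr0 lee_fin.
have ap : 0 < a by rewrite lt0r an0.
have [ble0|bp] := leP b 0; first by rewrite /xlogy (negPf an0) ble0 leNye.
by rewrite !xlogyEr // -EFinD lee_fin; exact: mul_ln_le.
Qed.

Lemma normr_mul_ln_le k a b : 0 < k -> 0 < a -> k * a <= b ->
  `|a * ln b| <= `|a * ln a| + `|ln k| * a + b.
Proof.
move=> k0 a0 kab; have b0 : 0 < b by apply: lt_le_trans kab; rewrite mulr_gt0.
have ln_kab : ln k + ln a <= ln b.
  by rewrite -lnM ?posrE ?mulr_gt0 // ler_ln ?posrE ?mulr_gt0.
have lower := ler_wpM2l (ltW a0) ln_kab.
have upper := @mul_ln_le a b a0 b0.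
have := ler_norm (a * ln a); have := ler_norm (- (a * ln a)).
have := ler_norm (ln k); have := ler_norm (- ln k).
rewrite !normrN ler_norml; move: lower upper; rewrite mulrDr.
nra.
Qed.

Lemma xlogy_suml (I : finType) (c f : I -> R) b :
  (forall i, 0 <= c i) -> (forall i, 0 <= f i) -> 0 <= b ->
  (\sum_i (c i)%:E * xlogy (f i) b = xlogy (\sum_i c i * f i) b)%E.
Proof.
move=> c0 f0 b0; have cf0 i : 0 <= c i * f i by rewrite mulr_ge0.
have [sum0|sum_neq0] := eqVneq (\sum_i c i * f i) 0.
  rewrite sum0 xlogy0 big1 // => i _.
  have /eqP : c i * f i = 0 by apply: (psumr_eq0P _ sum0) => // j _; exact: cf0.
  by rewrite mulf_eq0 => /orP[]/eqP->; rewrite ?mul0e ?xlogy0 ?mule0.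
have [bp|] := ltP 0 b.
  rewrite !xlogyEr // mulr_suml -sumEFin.
  by apply: eq_bigr => i _; rewrite xlogyEr // -EFinM mulrA.
rewrite le_eqVlt ltNge b0 orbF => /eqP b_eq0.
have [i0 ci0] : exists i, c i * f i != 0.
  apply/existsP; apply: contraNT sum_neq0; rewrite negb_exists => /forallP cf_eq0.
  by apply/eqP/big1 => i _; apply/eqP; rewrite -[_ == _]negbK cf_eq0.
move: ci0; rewrite mulf_eq0 negb_or => /andP[ci_neq0 fi_neq0].
have cip : 0 < c i0 by rewrite lt0r ci_neq0 c0.
rewrite (bigD1 i0) //= b_eq0 /xlogy (negPf sum_neq0) (negPf fi_neq0) lexx.
by rewrite mulrNy gtr0_sg // mul1e addNye.
Qed.

Lemma ge0_EFin_muleDr c (x y : \bar R) : 0 <= c ->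
  (c%:E * (x + y) = c%:E * x + c%:E * y)%E.
Proof.
move=> c0; have [->|cn0] := eqVneq c 0; first by rewrite !mul0e adde0.
have cp : 0 < c by rewrite lt0r cn0.
have cy : (c%:E * +oo = +oo)%E by rewrite mulry gtr0_sg // mul1e.
have cNy : (c%:E * -oo = -oo)%E by rewrite mulrNy gtr0_sg // mul1e.
case: x y => [x| |] [y| |] /=; rewrite ?cy ?cNy //.
by rewrite -EFinD -!EFinM mulrDr.
Qed.

Lemma ge0_EFin_sume_distrr (I : Type) (s : seq I) (P : pred I) c (F : I -> \bar R) :
  0 <= c -> (c%:E * \sum_(i <- s | P i) F i = \sum_(i <- s | P i) c%:E * F i)%E.
Proof.
move=> c0; elim: s => [|i s IHs]; first by rewrite !big_nil mule0.
by rewrite !big_cons; case: (P i); rewrite ?ge0_EFin_muleDr ?IHs.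
Qed.

Lemma sume_fibers (K I J : finType) (P : pred K) (c : K -> R)
    (alpha : K -> I) (beta : K -> J) (S : I -> J -> \bar R) :
  (forall t, P t -> 0 <= c t) ->
  (\sum_(t | P t) (c t)%:E * S (alpha t) (beta t) =
   \sum_j \sum_i (\sum_(t | [&& P t, alpha t == i & beta t == j]) c t)%:E * S i j)%E.
Proof.
move=> c0; rewrite (partition_big beta xpredT) //; apply: eq_bigr => j _.
rewrite (partition_big alpha xpredT) //; apply: eq_bigr => i _.
rewrite -sumEFin ge0_sume_distrl => [|t /and3P[Pt _ _]]; last by rewrite lee_fin c0.
apply: eq_big => [t|t /andP[/andP[_ /eqP->] /eqP->]] //.
by rewrite -andbA (andbC (beta t == j)).
Qed.

End xlogy.

Section integral_xlogy.
Context {R : realType} {d : measure_display} {T : measurableType d}.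
Variable mu : {measure set T -> \bar R}.
Local Open Scope ereal_scope.

Lemma measurable_xlogy (f g : T -> R) : measurable_fun setT f -> measurable_fun setT g ->
  measurable_fun setT (fun x => xlogy (f x) (g x)).
Proof.
move=> mf mg; rewrite /xlogy.
apply: measurable_fun_ifT; first by apply: measurable_fun_eqr => //; exact: measurable_cst.
  exact: measurable_cst.
apply: measurable_fun_ifT; first by apply: measurable_fun_ler => //; exact: measurable_cst.
  exact: measurable_cst.
apply/measurable_EFinP; apply: measurable_funM => //.
exact: measurableT_comp (@measurable_ln R) mg.
Qed.

Lemma ge0_integrable (f : T -> R) : measurable_fun setT f -> (forall x, 0 <= f x)%R ->
  \int[mu]_x (f x)%:E < +oo -> mu.-integrable setT (EFin \o f).
Proof.
move=> mf f0 f_fin; apply/integrableP; split; first exact/measurable_EFinP.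
rewrite (eq_integral (fun x => (f x)%:E)) // => x _.
by rewrite [(EFin \o f) x]/comp abse_EFin ger0_norm.
Qed.

Lemma nonintegrable_integralNy (u v : T -> \bar R) : measurable_fun setT u ->
  mu.-integrable setT v -> (forall x, u x <= v x) -> ~ mu.-integrable setT u ->
  \int[mu]_x u x = -oo.
Proof.
move=> mu_ iv uv u_nint; rewrite integralE.
suff -> : \int[mu]_x u^\- x = +oo by rewrite addeNy.
have [//|uneg_fin] := eqVneq (\int[mu]_x u^\- x) +oo.
exfalso; apply/u_nint/integrableP; split => //.
have upos_le : \int[mu]_x u^\+ x <= \int[mu]_x v^\+ x.
  apply: ge0_le_integral => //; [exact: measurable_funepos| |].
    by apply: measurable_funepos; case/integrableP: iv.
  by move=> x _; apply: (@funepos_le _ _ setT) => //; rewrite inE.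
rewrite (_ : (fun x => `|u x|) = u^\+ \+ u^\-); last by rewrite -fune_abse.
rewrite ge0_integralD //; [|exact: measurable_funepos|exact: measurable_funeneg].
rewrite lte_add_pinfty ?ltey // -ltey (le_lt_trans upos_le) // ltey_eq.
by rewrite integrable_pos_fin_num.
Qed.

Lemma integrable_xlogy (f g : T -> R) (k : R) : (0 < k)%R -> (forall x, 0 <= f x)%R ->
  (forall x, k * f x <= g x)%R -> measurable_fun setT f -> measurable_fun setT g ->
  mu.-integrable setT (fun x => (f x * ln (f x))%:E) ->
  mu.-integrable setT (EFin \o f) -> mu.-integrable setT (EFin \o g) ->
  mu.-integrable setT (fun x => xlogy (f x) (g x)).
Proof.
move=> k0 f0 kfg mf mg f_ent f_int g_int.
have g0 x : (0 <= g x)%R by apply: le_trans (kfg x); rewrite mulr_ge0 // ltW.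
pose dom x := (`|f x * ln (f x)| + `|ln k| * f x + g x)%R.
have dom_int : mu.-integrable setT (EFin \o dom).
  apply: (eq_integrable measurableT _ _ _ (integrableD measurableT
    (integrableD measurableT (integrable_abse f_ent) (integrableZl measurableT `|ln k| f_int))
    g_int)) => x _.
  by rewrite /dom /= -EFinM -!EFinD.
apply: le_integrable dom_int => //; first exact: measurable_xlogy.
have dom0 x : (0 <= dom x)%R by rewrite !addr_ge0 ?mulr_ge0.
move=> x _; rewrite [(EFin \o dom) x]/comp abse_EFin ger0_norm //.
have [->|fx_neq0] := eqVneq (f x) 0%R; first by rewrite xlogy0 abse0 lee_fin.
have fx0 : (0 < f x)%R by rewrite lt0r fx_neq0 f0.
rewrite xlogyEr ?abse_EFin ?lee_fin; last by apply: lt_le_trans (kfg x); rewrite mulr_gt0.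
exact: normr_mul_ln_le.
Qed.

Lemma integrableZl_or0 (c : R) (u : T -> \bar R) :
  c = 0%R \/ mu.-integrable setT u -> mu.-integrable setT (fun x => c%:E * u x).
Proof.
case=> [->|u_int]; last exact: integrableZl.
by apply: eq_integrable (integrable0 mu setT) => // x _; rewrite mul0e.
Qed.

Lemma integralZl_or0 (c : R) (u : T -> \bar R) :
  c = 0%R \/ mu.-integrable setT u -> c%:E * \int[mu]_x u x = \int[mu]_x (c%:E * u x).
Proof.
case=> [->|u_int]; last by rewrite integralZl.
by rewrite mul0e integral0_eq // => x _; rewrite mul0e.
Qed.

Section weighted_sum.
Context {I : finType} {c : I -> R} {u : I -> T -> \bar R}.
Hypothesis cu : forall i, c i = 0%R \/ mu.-integrable setT (u i).

Lemma integrable_sum_weighted : mu.-integrable setT (fun x => \sum_i (c i)%:E * u i x).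
Proof. by apply: integrable_sum => // i _; exact: integrableZl_or0. Qed.

Lemma integral_sum_weighted :
  \sum_i (c i)%:E * \int[mu]_x u i x = \int[mu]_x \sum_i (c i)%:E * u i x.
Proof.
rewrite integral_sum // => [|i]; last exact: integrableZl_or0.
by apply: eq_bigr => i _; exact: integralZl_or0.
Qed.

End weighted_sum.

(* A summand that is not integrable integrates to [-oo], being bounded above by an
   integrable function, and then so does the whole sum. *)
Lemma sume_integral_le (I : finType) (c : I -> R) (u v : I -> T -> \bar R) (B : \bar R) :
  (forall i, 0 <= c i)%R -> (forall i, measurable_fun setT (u i)) ->
  (forall i, mu.-integrable setT (v i)) -> (forall i x, u i x <= v i x) ->
  ((forall i, c i = 0%R \/ mu.-integrable setT (u i)) ->
     \int[mu]_x (\sum_i (c i)%:E * u i x) <= B) ->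
  \sum_i (c i)%:E * \int[mu]_x u i x <= B.
Proof.
move=> c0 mu_ iv uv sum_le.
have [cu|] := pselect (forall i, c i = 0%R \/ mu.-integrable setT (u i)).
  by rewrite integral_sum_weighted //; exact: sum_le.
move=> /existsNP[i0 /not_orP[/eqP ci0_neq0 u_nint]].
have ci0 : (0 < c i0)%R by rewrite lt0r ci0_neq0 c0.
rewrite (bigD1 i0) //= (nonintegrable_integralNy _ _ (mu_ i0) (iv i0) (uv i0) u_nint).
by rewrite mulrNy gtr0_sg // mul1e addNye leNye.
Qed.

End integral_xlogy.

Section bernoulli.
Context {R : realType} {d : measure_display} {T : measurableType d}.
Context {mu : {measure set T -> \bar R}} {r : R} {p : T -> R}.
Hypothesis rp : is_bern mu r p.

Lemma bern0_ge0 : 0 <= bern0 r.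
Proof. by case: rp => /andP[_ r1] _ _ _; rewrite subr_ge0. Qed.

Lemma bern1_ge0 x : 0 <= bern1 r p x.
Proof. by case: rp => /andP[r0 _] p0 _ _; rewrite mulr_ge0. Qed.

Lemma measurable_bern1 : measurable_fun setT (bern1 r p).
Proof. by case: rp => _ _ mp _; apply: measurable_funM => //; exact: measurable_cst. Qed.

Lemma integrable_bern_state : mu.-integrable setT (EFin \o p).
Proof. by case: rp => _ p0 mp p1; apply: ge0_integrable => //; rewrite p1 ltey. Qed.

Lemma integrable_bern1 : mu.-integrable setT (EFin \o bern1 r p).
Proof.
exact: eq_integrable (integrableZl measurableT r integrable_bern_state).
Qed.

Lemma integral_bern1 : (\int[mu]_x (bern1 r p x)%:E = r%:E)%E.
Proof.
case: rp => _ _ _ p1; under eq_integral do rewrite /bern1 EFinM.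
by rewrite (integralZl measurableT integrable_bern_state) p1 mule1.
Qed.

End bernoulli.

Section bernoulli_mixture_def.
Context {R : realType} {T : Type} {I : finType}.

Definition bern_mix_r (c r : I -> R) : R := \sum_i c i * r i.

(* With existence probability zero the state density is irrelevant; it is then
   taken to be [\sum_i c i * p i] so as to remain a probability density. *)
Definition bern_mix_p (c r : I -> R) (p : I -> T -> R) : T -> R := fun x =>
  \sum_i (if bern_mix_r c r == 0 then c i else c i * r i / bern_mix_r c r) * p i x.

End bernoulli_mixture_def.

Section bernoulli_mixture.
Context {R : realType} {d : measure_display} {T : measurableType d}.
Variable mu : {measure set T -> \bar R}.
Variables (I : finType) (c r : I -> R) (p : I -> T -> R).
Hypotheses (c0 : forall i, 0 <= c i) (c1 : \sum_i c i = 1)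
  (rp : forall i, is_bern mu (r i) (p i)).

Let r0 i : 0 <= r i. Proof. by case: (rp i) => /andP[]. Qed.

Lemma bern0_mix : bern0 (bern_mix_r c r) = \sum_i c i * bern0 (r i).
Proof.
rewrite /bern0 /bern_mix_r.
by under [RHS]eq_bigr do rewrite mulrBr mulr1; rewrite sumrB c1.
Qed.

Lemma bern1_mix :
  bern1 (bern_mix_r c r) (bern_mix_p c r p) = fun x => \sum_i c i * bern1 (r i) (p i) x.
Proof.
apply/funext => x; rewrite /bern1 /bern_mix_p.
have [mix0|mix_neq0] := eqVneq (bern_mix_r c r) 0.
  rewrite mix0 mul0r; apply/esym/big1 => i _.
  rewrite mulrA (_ : c i * r i = 0) ?mul0r //.
  by apply: (psumr_eq0P _ mix0) => // j _; rewrite mulr_ge0.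
rewrite mulr_sumr; apply: eq_bigr => i _.
by rewrite mulrA [bern_mix_r c r * _]mulrC divfK // mulrA.
Qed.

Lemma integral_sum_bern_state (a : I -> R) :
  (\int[mu]_x (\sum_i a i * p i x)%:E = (\sum_i a i)%:E)%E.
Proof.
have p_int i : a i = 0 \/ mu.-integrable setT (EFin \o p i).
  by right; exact: integrable_bern_state (rp i).
rewrite (eq_integral (fun x => \sum_i (a i)%:E * (EFin \o p i) x)%E); last first.
  by move=> x _; rewrite -sumEFin; apply: eq_bigr => i _; rewrite EFinM.
rewrite -(integral_sum_weighted mu p_int) -sumEFin; apply: eq_bigr => i _.
by case: (rp i) => _ _ _ p1; rewrite [X in (_ * X)%E]p1 mule1.
Qed.

Lemma is_bern_mix : is_bern mu (bern_mix_r c r) (bern_mix_p c r p).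
Proof.
have mix_ge0 : 0 <= bern_mix_r c r by apply: sumr_ge0 => i _; rewrite mulr_ge0.
have weight_ge0 i : 0 <= if bern_mix_r c r == 0 then c i else c i * r i / bern_mix_r c r.
  by case: ifP => // _; rewrite divr_ge0 ?mulr_ge0.
split.
- rewrite mix_ge0 -c1; apply: ler_sum => i _.
  by rewrite ler_piMr //; case: (rp i) => /andP[].
- by move=> x; apply: sumr_ge0 => i _; rewrite mulr_ge0 //; case: (rp i).
- apply: measurable_sum => i; apply: measurable_funM; first exact: measurable_cst.
  by case: (rp i).
- rewrite integral_sum_bern_state; case: eqP => [_|/eqP mix_neq0]; first by rewrite c1.
  by rewrite -mulr_suml divff.
Qed.

End bernoulli_mixture.

Section mixture.
Context {R : realType} {d : measure_display} {T : measurableType d}.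
Variable mu : {measure set T -> \bar R}.
Context {I : finType} {q b : I -> R} {f : I -> T -> R}.
Hypotheses (q0 : forall i, 0 <= q i) (b0 : forall i, 0 <= b i)
  (f0 : forall i x, 0 <= f i x) (mf : forall i, measurable_fun setT (f i))
  (f_int : forall i, mu.-integrable setT (EFin \o f i))
  (f_ent : forall i, mu.-integrable setT (fun x => (f i x * ln (f i x))%:E)).

Local Notation F0 := (\sum_i q i * b i).
Local Notation F1 := (fun x => \sum_i q i * f i x).

Let F0_ge0 : 0 <= F0.
Proof. by apply: sumr_ge0 => i _; rewrite mulr_ge0. Qed.

Let F1_ge0 x : 0 <= F1 x.
Proof. by apply: sumr_ge0 => i _; rewrite mulr_ge0. Qed.

Lemma measurable_mix : measurable_fun setT F1.
Proof.
by apply: measurable_sum => i; apply: measurable_funM => //; exact: measurable_cst.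
Qed.

Lemma integrable_mix : mu.-integrable setT (EFin \o F1).
Proof.
have := integrable_sum measurableT (index_enum I) (P := xpredT)
  (h := fun i x => (q i)%:E * (EFin \o f i) x)%E
  (fun i _ => integrableZl measurableT (q i) (f_int i)).
apply: eq_integrable => // x _.
by rewrite /comp -sumEFin; apply: eq_bigr => i _; rewrite EFinM.
Qed.

Lemma integrable_xlogy_mix i :
  q i = 0 \/ mu.-integrable setT (fun x => xlogy (f i x) (F1 x)).
Proof.
have [->|qi_neq0] := eqVneq (q i) 0; [by left|right].
apply: (integrable_xlogy mu (f i) _ (q i)) => //.
- by rewrite lt0r qi_neq0 q0.
- move=> x; rewrite (bigD1 i) //= lerDl.
  by apply: sumr_ge0 => j _; rewrite mulr_ge0.
- exact: measurable_mix.
- exact: integrable_mix.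
Qed.

Lemma integrable_xlogy_mix_self : mu.-integrable setT (fun x => xlogy (F1 x) (F1 x)).
Proof.
apply: eq_integrable (integrable_sum_weighted mu integrable_xlogy_mix) => // x _.
by rewrite xlogy_suml.
Qed.

Lemma setint_xlogy_mix_eq :
  (\sum_i (q i)%:E * setint_xlogy mu (b i) (f i) F0 F1 = setint_xlogy mu F0 F1 F0 F1)%E.
Proof.
rewrite /setint_xlogy; under eq_bigr => i _ do rewrite (ge0_EFin_muleDr _ _ _ (q0 i)).
rewrite big_split /= xlogy_suml // (integral_sum_weighted mu integrable_xlogy_mix).
by congr (_ + _)%E; apply: eq_integral => x _; rewrite xlogy_suml.
Qed.

Lemma sume_integral_xlogy_mix_le (G : T -> R) (g f1 : R) :
  (forall x, 0 <= G x) -> measurable_fun setT G -> mu.-integrable setT (EFin \o G) ->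
  (\int[mu]_x (G x)%:E = g%:E)%E -> (\int[mu]_x (F1 x)%:E = f1%:E)%E ->
  (\sum_i (q i)%:E * \int[mu]_x xlogy (f i x) (G x) <=
   \int[mu]_x xlogy (F1 x) (F1 x) + (g - f1)%:E)%E.
Proof.
move=> G0 mG G_int intG intF1.
apply: (sume_integral_le mu _ _ _
  (fun i x => xlogy (f i x) (f i x) + (G x - f i x)%:E)%E) => //.
- by move=> i; exact: measurable_xlogy.
- move=> i; apply: integrableD => //.
    by apply: eq_integrable (f_ent i) => // x _; rewrite xlogyxx.
  by apply: eq_integrable (integrableB measurableT G_int (f_int i)).
- by move=> i x; exact: xlogy_le.
move=> qu; rewrite (eq_integral (fun x => xlogy (F1 x) (G x))); last first.
  by move=> x _; rewrite xlogy_suml.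
have GF_int : mu.-integrable setT (fun x => (G x)%:E - (F1 x)%:E)%E.
  by apply: eq_integrable (integrableB measurableT G_int integrable_mix).
apply: (@le_trans _ _ (\int[mu]_x (xlogy (F1 x) (F1 x) + ((G x)%:E - (F1 x)%:E)))%E).
  apply: le_integral => //.
  - apply: eq_integrable (integrable_sum_weighted mu qu) => // x _.
    by rewrite xlogy_suml.
  - exact: integrableD integrable_xlogy_mix_self GF_int.
  - by move=> x _; rewrite -EFinB; exact: xlogy_le.
rewrite integralD ?integrable_xlogy_mix_self // integralB_EFin ?integrable_mix //.
by rewrite intG intF1 EFinB.
Qed.

Lemma setint_xlogy_mix_le (G0 : R) (G1 : T -> R) (g1 f1 : R) :
  0 <= G0 -> (forall x, 0 <= G1 x) -> measurable_fun setT G1 ->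
  mu.-integrable setT (EFin \o G1) ->
  (\int[mu]_x (G1 x)%:E = g1%:E)%E -> (\int[mu]_x (F1 x)%:E = f1%:E)%E ->
  G0 + g1 = F0 + f1 ->
  (\sum_i (q i)%:E * setint_xlogy mu (b i) (f i) G0 G1 <= setint_xlogy mu F0 F1 F0 F1)%E.
Proof.
move=> G00 G10 mG1 G1_int intG1 intF1 mass.
rewrite /setint_xlogy; under eq_bigr => i _ do rewrite (ge0_EFin_muleDr _ _ _ (q0 i)).
rewrite big_split /= xlogy_suml //.
apply: le_trans (leeD (xlogy_le _ _ F0_ge0 G00)
  (sume_integral_xlogy_mix_le _ _ _ G10 mG1 G1_int intG1 intF1)) _.
by rewrite addeACA -EFinD (_ : G0 - F0 + (g1 - f1) = 0) ?adde0 //; lra.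
Qed.

End mixture.

Section assignment.
Context {R : realType} {N : nat} {H : finType} {A : {set N.-tuple H}}
  {w : N.-tuple H -> R} {qa : N.-tuple H -> {perm 'I_N} -> R}.
Hypotheses (w0 : forall a, a \in A -> 0 <= w a)
  (qa0 : forall a pi, a \in A -> 0 <= qa a pi).

Lemma qP_ge0 h j : 0 <= qP A w qa h j.
Proof.
apply: sumr_ge0 => i _; apply: sumr_ge0 => a /andP[aA _].
by rewrite mulr_ge0 ?w0 // sumr_ge0 // => pi _; exact: qa0.
Qed.

Lemma qPE h j : qP A w qa h j =
  \sum_(t : N.-tuple H * ({perm 'I_N} * 'I_N) |
        [&& t.1 \in A, tnth t.1 t.2.2 == h & t.2.1 t.2.2 == j]) w t.1 * qa t.1 t.2.1.
Proof.
rewrite big_mkcond -(pair_big xpredT xpredT (fun (a : N.-tuple H) (p : {perm 'I_N} * 'I_N) =>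
  if [&& a \in A, tnth a p.2 == h & p.1 p.2 == j] then w a * qa a p.1 else 0)) /=.
under eq_bigr => a _ do rewrite -(pair_big xpredT xpredT (fun (pi : {perm 'I_N}) (i : 'I_N) =>
  if [&& a \in A, tnth a i == h & pi i == j] then w a * qa a pi else 0)) /=.
under eq_bigr do rewrite exchange_big.
rewrite exchange_big /qP; apply: eq_bigr => i _.
rewrite big_mkcond; apply: eq_bigr => a _.
case: (a \in A) => /=; last by rewrite big1.
case: (tnth a i == h) => /=; last by rewrite big1.
by rewrite mulr_sumr big_mkcond.
Qed.

Lemma sume_qP (S : H -> 'I_N -> \bar R) :
  (\sum_(a in A) \sum_(pi : {perm 'I_N}) (w a * qa a pi)%:E * \sum_(i < N) S (tnth a i) (pi i)
   = \sum_(j < N) \sum_(h : H) (qP A w qa h j)%:E * S h j)%E.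
Proof.
under eq_bigr => a aA do under eq_bigr => pi _ do
  rewrite (ge0_EFin_sume_distrr _ _ _ _ _ (mulr_ge0 (w0 _ aA) (qa0 _ pi aA))).
under eq_bigr do rewrite pair_big /=.
rewrite pair_big_dep /= sume_fibers => [|t /andP[t_A _]]; last first.
  exact: mulr_ge0 (w0 _ t_A) (qa0 _ _ t_A).
apply: eq_bigr => j _; apply: eq_bigr => h _.
by rewrite qPE; congr (_%:E * _)%E; apply: eq_bigl => t; rewrite andbT.
Qed.

Section stochastic.
Hypotheses (w1 : \sum_(a in A) w a = 1) (qa1 : forall a, a \in A -> \sum_pi qa a pi = 1).

Lemma qP_sum1 j : \sum_h qP A w qa h j = 1.
Proof.
under eq_bigr do rewrite qPE.
transitivity (\sum_(t : N.-tuple H * ({perm 'I_N} * 'I_N) | (t.1 \in A) && (t.2.1 t.2.2 == j))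
                w t.1 * qa t.1 t.2.1).
  rewrite [RHS](partition_big (fun t => tnth t.1 t.2.2) xpredT) //.
  by apply: eq_bigr => h _; apply: eq_bigl => t; rewrite -andbA (andbC (_ == j)).
rewrite -(pair_big_dep (fun a => a \in A) (fun _ (p : {perm 'I_N} * 'I_N) => p.1 p.2 == j)
  (fun a (p : {perm 'I_N} * 'I_N) => w a * qa a p.1)) /= -w1; apply: eq_bigr => a aA.
rewrite -[RHS]mulr1 -(qa1 _ aA) mulr_sumr.
rewrite -(pair_big_dep xpredT (fun (pi : {perm 'I_N}) i => pi i == j)
  (fun pi (_ : 'I_N) => w a * qa a pi)) /=.
apply: eq_bigr => pi _; rewrite (big_pred1 ((pi^-1)%g j)) // => i /=.
exact: (can2_eq (permK pi) (permKV pi)).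
Qed.

End stochastic.
End assignment.

Theorem theorem6 (R : realType) (d : measure_display) (T : measurableType d)
  (mu : {measure set T -> \bar R})
  (N : nat) (H : finType) (fr : H -> R) (fp : H -> T -> R)
  (A : {set N.-tuple H}) (w : N.-tuple H -> R)
  (Hf : forall h, is_bern mu (fr h) (fp h))
  (Hent : forall h, mu.-integrable setT
            (fun x => ((bern1 (fr h) (fp h) x) * ln (bern1 (fr h) (fp h) x))%:E))
  (Hw0 : forall a, a \in A -> 0 <= w a)
  (Hw1 : \sum_(a in A) w a = 1)
  (qa : N.-tuple H -> {perm 'I_N} -> R)
  (Hq0 : forall a pi, a \in A -> 0 <= qa a pi)
  (Hq1 : forall a, a \in A -> \sum_(pi : {perm 'I_N}) qa a pi = 1) :
  exists (gr : 'I_N -> R) (gp : 'I_N -> T -> R),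
    [/\ forall j, is_bern mu (gr j) (gp j),
        J0 mu fr fp A w gr gp qa = Obj mu fr fp (qP A w qa)
      & forall (gr' : 'I_N -> R) (gp' : 'I_N -> T -> R),
          (forall j, is_bern mu (gr' j) (gp' j)) ->
          (J0 mu fr fp A w gr gp qa <= J0 mu fr fp A w gr' gp' qa)%E].
Proof.
set q := qP A w qa.
have q0 j h : 0 <= q h j by exact: qP_ge0.
have q1 j : \sum_h q h j = 1 by exact: qP_sum1.
have b0 h := bern0_ge0 (Hf h); have f0 h := bern1_ge0 (Hf h).
have mf h := measurable_bern1 (Hf h); have f_int h := integrable_bern1 (Hf h).
pose gr j := bern_mix_r (q^~ j) fr; pose gp j := bern_mix_p (q^~ j) fr fp.
have g_bern j : is_bern mu (gr j) (gp j) by exact: is_bern_mix.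
have mix0E j : mix0 fr q j = bern0 (gr j) by rewrite bern0_mix.
have mix1E j : mix1 fr fp q j = bern1 (gr j) (gp j) by rewrite (bern1_mix mu).
have J0E gr' gp' : J0 mu fr fp A w gr' gp' qa = (- \sum_j \sum_h (q h j)%:E *
    setint_xlogy mu (bern0 (fr h)) (bern1 (fr h) (fp h)) (bern0 (gr' j)) (bern1 (gr' j) (gp' j)))%E.
  by rewrite /J0 (sume_qP Hw0 Hq0 (fun h j => setint_xlogy mu (bern0 (fr h))
    (bern1 (fr h) (fp h)) (bern0 (gr' j)) (bern1 (gr' j) (gp' j)))).
have J0_Obj : J0 mu fr fp A w gr gp qa = Obj mu fr fp q.
  rewrite J0E /Obj; congr (- _)%E; apply: eq_bigr => j _.
  by rewrite -mix0E -mix1E (setint_xlogy_mix_eq mu (q0 j) b0 f0 mf f_int Hent).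
exists gr, gp; split => // gr' gp' g'_bern.
rewrite J0_Obj J0E /Obj leeN2; apply: lee_sum => j _.
apply: (setint_xlogy_mix_le mu (q0 j) b0 f0 mf f_int Hent _ _ _ _ (bern0_ge0 (g'_bern j))
  (bern1_ge0 (g'_bern j)) (measurable_bern1 (g'_bern j)) (integrable_bern1 (g'_bern j))
  (integral_bern1 (g'_bern j))).
- by have := integral_bern1 (g_bern j); rewrite -mix1E; apply.
- by rewrite -/(mix0 fr q j) mix0E /bern0; lra.
Qed.
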